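(* Let $\bm{\mu}_0,\bm{\mu}_1\in\mathbb{R}^d$, $\epsilon>0$, and define the GLRT costs $C_k(\mathbf{x})=\|g_\epsilon(\mathbf{x}-\bm{\mu}_k)\|_2^2$ for $k=0,1$. Set $\mathbf{e}^*=-\epsilon\,\mathrm{sign}(\bm{\mu}_0-\bm{\mu}_1)$, with $\mathrm{sign}$ applied coordinate-wise. Then for every $\mathbf{n}\in\mathbb{R}^d$ and every $\mathbf{e}\in\mathbb{R}^d$ with $\|\mathbf{e}\|_\infty\le\epsilon$, $$C_1(\bm{\mu}_0+\mathbf{e}+\mathbf{n})-C_0(\bm{\mu}_0+\mathbf{e}+\mathbf{n})\ \ge\ C_1(\bm{\mu}_0+\mathbf{e}^*+\mathbf{n})-C_0(\bm{\mu}_0+\mathbf{e}^*+\mathbf{n}).$$ Consequently, under hypothesis $\mathcal{H}_0$, where $\mathbf{X}=\bm{\mu}_0+\mathbf{e}+\mathbf{N}$ with $\mathbf{N}\sim\mathcal{N}(\mathbf{0},\sigma^2 I_d)$ and $\sigma>0$: (i) for every realization $\mathbf{n}$, if some admissible $\mathbf{e}$ makes $C_1<C_0$, then $\mathbf{e}^*$ also makes $C_1<C_0$ (noise-aware optimality); (ii) $\mathbf{e}^*$ maximizes $\Pr(C_1(\mathbf{X})<C_0(\mathbf{X}))$ over all $\mathbf{e}$ with $\|\mathbf{e}\|_\infty\le\epsilon$ (noise-agnostic optimality). Symmetrically, under $\mathcal{H}_1$ the attack $-\epsilon\,\mathrm{sign}(\bm{\mu}_1-\bm{\mu}_0)$ is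 worst-case in both senses.
   Context: For $\epsilon>0$, $g_\epsilon(x)=\mathrm{sign}(x)\max(0,|x|-\epsilon)$ with $\mathrm{sign}(0)=0$, applied coordinate-wise. The GLRT classifier decides $\mathcal{H}_1$ when $C_1<C_0$. An attack is a vector $\mathbf{e}$ with $\|\mathbf{e}\|_\infty\le\epsilon$, which may depend on the true hypothesis. *)

From HB Require Import structures.
From mathcomp Require Import all_boot all_order all_algebra.
From mathcomp Require Import all_classical all_reals all_analysis.
Set Implicit Arguments. Unset Strict Implicit. Unset Printing Implicit Defensive.
Import Order.TTheory GRing.Theory Num.Theory.
Local Open Scope classical_set_scope.
Local Open Scope ring_scope.

(* coordinate-wise sign, with sign 0 = 0 *)
Definition sgnr {R : realType} (x : R) : R := Num.sg x.

Definition g_eps {R : realType} (eps x : R) : R :=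
  sgnr x * Num.max 0 (`|x| - eps).

Definition cost {R : realType} {d : nat} (eps : R) (mu x : 'rV[R]_d) : R :=
  \sum_(i < d) (g_eps eps (x ord0 i - mu ord0 i)) ^+ 2.

Definition attack {R : realType} {d : nat} (eps : R) (a b : 'rV[R]_d) : 'rV[R]_d :=
  \row_(i < d) (- (eps * sgnr (a ord0 i - b ord0 i))).

Definition admissible {R : realType} {d : nat} (eps : R) (e : 'rV[R]_d) : Prop :=
  forall i : 'I_d, `|e ord0 i| <= eps.

Definition mutually_independent {dT : measure_display} {T : measurableType dT}
  {R : realType} (P : probability T R) {d : nat} (N : 'I_d -> {RV P >-> R}) : Prop :=
  forall B : 'I_d -> set R, (forall i, measurable (B i)) ->
    P (\bigcap_(i in [set: 'I_d]) (N i @^-1` B i)) =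
    (\prod_(i < d) P (N i @^-1` B i))%E.

(* N ~ N(0, sigma^2 I_d): i.i.d. centered normal coordinates with std sigma *)
Definition iid_gaussian {dT : measure_display} {T : measurableType dT}
  {R : realType} (P : probability T R) {d : nat} (sigma : R)
  (N : 'I_d -> {RV P >-> R}) : Prop :=
  (forall i A, measurable A -> distribution P (N i) A = normal_prob 0 sigma A)
  /\ mutually_independent N.

Definition noise_vec {dT : measure_display} {T : measurableType dT}
  {R : realType} {P : probability T R} {d : nat} (N : 'I_d -> {RV P >-> R})
  (w : T) : 'rV[R]_d := \row_(i < d) N i w.

From HB Require Import structures.
From mathcomp Require Import all_boot all_order all_algebra.
From mathcomp Require Import all_classical all_reals all_analysis.
From mathcomp Require Import measurable_realfun lra ring.
Import Order.TTheory GRing.Theory Num.Theory.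
Local Open Scope classical_set_scope.
Local Open Scope ring_scope.

(* Since g_eps(x)^2 = max(0, x - eps)^2 + max(0, -x - eps)^2 is a sum of convex
   functions, its increments x |-> g(x + a)^2 - g(x)^2 (a >= 0) are nondecreasing.
   The cost gap C_1 - C_0 splits over coordinates into such increments with
   a = mu0_i - mu1_i taken at x = n_i + e_i, so each coordinate is minimised by
   pushing e_i to the end of [-eps, eps] opposite to the sign of a, i.e. by e*.
   The probabilistic statements follow because the attack e* then enlarges the
   decision event pointwise in the noise. *)

Section soft_threshold.
Context {R : realType}.
Implicit Types eps s t a e x : R.

Definition pos_part_sq (y : R) : R := Num.max 0 y ^+ 2.

Lemma pos_part_sq_incr_mono s t a : s <= t -> 0 <= a ->
  pos_part_sq (s + a) - pos_part_sq s <= pos_part_sq (t + a) - pos_part_sq t.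
Proof.
move=> st a0; rewrite /pos_part_sq.
case: (lerP 0 s) => hs; case: (lerP 0 t) => ht;
case: (lerP 0 (s + a)) => hsa; case: (lerP 0 (t + a)) => hta;
rewrite ?(max_r hs) ?(max_l (ltW hs)) ?(max_r ht) ?(max_l (ltW ht))
  ?(max_r hsa) ?(max_l (ltW hsa)) ?(max_r hta) ?(max_l (ltW hta)); nra.
Qed.

Lemma g_eps_sqE eps x : 0 <= eps ->
  g_eps eps x ^+ 2 = pos_part_sq (x - eps) + pos_part_sq (- x - eps).
Proof.
move=> eps0; rewrite /g_eps /sgnr /pos_part_sq.
have [x0|x0|->] := ltrgtP x 0.
- have -> : Num.max 0 (x - eps) = 0 by apply: max_l; lra.
  by rewrite ltr0_sg // ltr0_norm // mulN1r sqrrN expr0n add0r.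
- have -> : Num.max 0 (- x - eps) = 0 by apply: max_l; lra.
  by rewrite gtr0_sg // gtr0_norm // mul1r expr0n addr0.
- rewrite sgr0 mul0r oppr0 sub0r.
  have -> : Num.max 0 (- eps) = 0 by apply: max_l; lra.
  by rewrite expr0n addr0.
Qed.

Lemma g_eps_sq_incr_mono eps s t a : 0 <= eps -> s <= t -> 0 <= a ->
  g_eps eps (s + a) ^+ 2 - g_eps eps s ^+ 2 <= g_eps eps (t + a) ^+ 2 - g_eps eps t ^+ 2.
Proof.
move=> eps0 st a0; rewrite !g_eps_sqE //.
have up := pos_part_sq_incr_mono (s - eps) (t - eps) a ltac:(lra) a0.
have down := pos_part_sq_incr_mono (- t - a - eps) (- s - a - eps) a ltac:(lra) a0.
have -> : s + a - eps = s - eps + a by ring.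
have -> : t + a - eps = t - eps + a by ring.
have -> : - (s + a) - eps = - s - a - eps by ring.
have -> : - (t + a) - eps = - t - a - eps by ring.
have -> : - s - eps = - s - a - eps + a by ring.
have -> : - t - eps = - t - a - eps + a by ring.
by move: up down; lra.
Qed.

Lemma g_eps_sq_incr_attack_le eps a t e : 0 <= eps -> `|e| <= eps ->
  g_eps eps (t - eps * sgnr a + a) ^+ 2 - g_eps eps (t - eps * sgnr a) ^+ 2
  <= g_eps eps (t + e + a) ^+ 2 - g_eps eps (t + e) ^+ 2.
Proof.
rewrite /sgnr => eps0 /ler_normlP [le_Ne le_e].
have [a0|a0|->] := ltrgtP a 0; last by rewrite !addr0; lra.
- (* for a < 0 compare the increments by -a from the base points t + e + a <= t + eps + a *)
  rewrite ltr0_sg // mulrN1 opprK.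
  have := g_eps_sq_incr_mono eps (t + e + a) (t + eps + a) (- a) eps0 ltac:(lra) ltac:(lra).
  rewrite !addrK; lra.
- rewrite gtr0_sg // mulr1.
  exact: g_eps_sq_incr_mono eps (t - eps) (t + e) a eps0 ltac:(lra) (ltW a0).
Qed.

End soft_threshold.

Lemma cost_gap_attack_le (R : realType) (d : nat) (eps : R) (m0 m1 n e : 'rV[R]_d) :
  0 <= eps -> admissible eps e ->
  cost eps m1 (m0 + attack eps m0 m1 + n) - cost eps m0 (m0 + attack eps m0 m1 + n)
  <= cost eps m1 (m0 + e + n) - cost eps m0 (m0 + e + n).
Proof.
move=> eps0 adm_e; rewrite /cost -!sumrB; apply: ler_sum => i _; rewrite !mxE.
have shift1 y :
  m0 ord0 i + y + n ord0 i - m1 ord0 i = n ord0 i + y + (m0 ord0 i - m1 ord0 i) by ring.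
have shift0 y : m0 ord0 i + y + n ord0 i - m0 ord0 i = n ord0 i + y by ring.
rewrite !shift1 !shift0.
exact: g_eps_sq_incr_attack_le eps0 (adm_e i).
Qed.

Section measurability.
Context (R : realType) (dT : measure_display) (T : measurableType dT).

Lemma measurable_g_eps_sq (eps : R) : 0 <= eps ->
  measurable_fun setT (fun x : R => g_eps eps x ^+ 2).
Proof.
move=> eps0; rewrite (funext (fun x => g_eps_sqE eps x eps0)) /pos_part_sq.
by apply: measurable_funD; apply: measurable_funX; apply: measurable_maxr;
  do ?[exact: measurable_cst | apply: measurable_funB | apply: measurable_funN];
  exact: measurable_id.
Qed.

Lemma measurable_cost_noise (P : probability T R) (d : nat)
    (N : 'I_d -> {RV P >-> R}) (eps : R) (c mu : 'rV[R]_d) : 0 <= eps ->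
  measurable_fun setT (fun w => cost eps mu (c + noise_vec N w)).
Proof.
move=> eps0; apply: measurable_sum => i.
have coord_shift : measurable_fun setT (fun w => (c + noise_vec N w) ord0 i - mu ord0 i).
  under eq_fun do rewrite !mxE.
  exact: measurable_funB (measurable_funD (measurable_cst _) (measurable_funPT _))
    (measurable_cst _).
exact: measurableT_comp (measurable_g_eps_sq eps eps0) coord_shift.
Qed.

Lemma measurable_bool_set (b : T -> bool) :
  measurable_fun setT b -> measurable [set w | b w].
Proof.
move=> mb; have := mb measurableT [set true] I.
by rewrite setTI; congr measurable; apply/funext => w /=; apply/propext; split => // /eqP.
Qed.

End measurability.

Theorem proposition2 (R : realType) (d : nat) (mu0 mu1 : 'rV[R]_d) (eps : R)
  (heps : 0 < eps) :
  (forall n e : 'rV[R]_d, admissible eps e ->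
     cost eps mu1 (mu0 + e + n) - cost eps mu0 (mu0 + e + n)
     >= cost eps mu1 (mu0 + attack eps mu0 mu1 + n)
        - cost eps mu0 (mu0 + attack eps mu0 mu1 + n))
  /\ (forall n e : 'rV[R]_d, admissible eps e ->
     cost eps mu1 (mu0 + e + n) < cost eps mu0 (mu0 + e + n) ->
     cost eps mu1 (mu0 + attack eps mu0 mu1 + n)
       < cost eps mu0 (mu0 + attack eps mu0 mu1 + n))
  /\ (forall (dT : measure_display) (T : measurableType dT)
        (P : probability T R) (sigma : R) (N : 'I_d -> {RV P >-> R}),
      0 < sigma -> iid_gaussian sigma N ->
      forall e : 'rV[R]_d, admissible eps e ->
      (P [set w | (cost eps mu1 (mu0 + e + noise_vec N w)
                  < cost eps mu0 (mu0 + e + noise_vec N w))%R]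
       <= P [set w | (cost eps mu1 (mu0 + attack eps mu0 mu1 + noise_vec N w)
                  < cost eps mu0 (mu0 + attack eps mu0 mu1 + noise_vec N w))%R])%E)
  /\ (forall n e : 'rV[R]_d, admissible eps e ->
     cost eps mu0 (mu1 + e + n) - cost eps mu1 (mu1 + e + n)
     >= cost eps mu0 (mu1 + attack eps mu1 mu0 + n)
        - cost eps mu1 (mu1 + attack eps mu1 mu0 + n))
  /\ (forall n e : 'rV[R]_d, admissible eps e ->
     cost eps mu0 (mu1 + e + n) <= cost eps mu1 (mu1 + e + n) ->
     cost eps mu0 (mu1 + attack eps mu1 mu0 + n)
       <= cost eps mu1 (mu1 + attack eps mu1 mu0 + n))
  /\ (forall (dT : measure_display) (T : measurableType dT)
        (P : probability T R) (sigma : R) (N : 'I_d -> {RV P >-> R}),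
      0 < sigma -> iid_gaussian sigma N ->
      forall e : 'rV[R]_d, admissible eps e ->
      (P [set w | (cost eps mu0 (mu1 + e + noise_vec N w)
                  <= cost eps mu1 (mu1 + e + noise_vec N w))%R]
       <= P [set w | (cost eps mu0 (mu1 + attack eps mu1 mu0 + noise_vec N w)
                  <= cost eps mu1 (mu1 + attack eps mu1 mu0 + noise_vec N w))%R])%E).
Proof.
have eps0 := ltW heps.
have gap m0 m1 n e := @cost_gap_attack_le R d eps m0 m1 n e eps0.
split; first by move=> n e; exact: gap.
split; first by move=> n e adm_e; have := gap mu0 mu1 n e adm_e; lra.
split.
  move=> dT T P sigma N _ _ e adm_e; apply: le_measure; rewrite ?inE.
  1,2: by apply: measurable_bool_set; apply: measurable_fun_ltr;
    exact: measurable_cost_noise.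
  by move=> w /=; have := gap mu0 mu1 (noise_vec N w) e adm_e; lra.
split; first by move=> n e; exact: gap.
split; first by move=> n e adm_e; have := gap mu1 mu0 n e adm_e; lra.
move=> dT T P sigma N _ _ e adm_e; apply: le_measure; rewrite ?inE.
1,2: by apply: measurable_bool_set; apply: measurable_fun_ler;
    exact: measurable_cost_noise.
by move=> w /=; have := gap mu1 mu0 (noise_vec N w) e adm_e; lra.
Qed.
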